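(* Let $\ell\in\{\tfrac12,\tfrac32,\tfrac52,\dots\}$ and let $\tau^\ell$ be the $(2\ell+1)\times(2\ell+1)$ matrix defined in the context. Then: (a) $\tau^\ell$ is invertible; (b) $|\tau^\ell_{-\ell,-\ell}|<1$ and $|\tau^\ell_{\ell,\ell}|<1$; (c) Let $v\in\mathbb{C}^{2\ell+1}$ (coordinates indexed by $-\ell,-\ell+1,\dots,\ell$) be supported either on $\{-\ell,\dots,-\tfrac12\}$ or on $\{\tfrac12,\dots,\ell\}$, and suppose $\tau^\ell v$ is supported either on $\{n: n+\ell\text{ even}\}$ or on $\{n: n+\ell\text{ odd}\}$. Then $v=0$ (and hence $\tau^\ell v=0$).
   Context: For $\ell\in\{\tfrac12,1,\tfrac32,2,\dots\}$ and $m,n\in\{-\ell,-\ell+1,\dots,\ell\}$, define $$\tau^\ell_{m,n}=\sqrt{\frac{(\ell-m)!(\ell+m)!}{(\ell-n)!(\ell+n)!}}\;\frac{i^{2\ell}}{2^\ell}\int_{|z|=1}(z+1)^{\ell-n}(z-1)^{\ell+n}z^{m-\ell}\,\frac{dz}{2\pi i z},$$ i.e. the prefactor times the coefficient of $z^{\ell-m}$ in the polynomial $(z+1)^{\ell-n}(z-1)^{\ell+n}$. The matrix $\tau^\ell=(\tau^\ell_{m,n})$, rows indexed by $m$ and columns by $n$ in increasing order from $-\ell$ to $\ell$, is the matrix of the spin-$\ell$ irreducible representation of $SU(2)$ evaluated at $\frac{1}{\sqrt2}\begin{pmatrix} i & i\\ i & -i\end{pmatrix}$, and is unitary. *)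

From HB Require Import structures.
From mathcomp Require Import all_boot all_order all_algebra all_field.
Set Implicit Arguments. Unset Strict Implicit. Unset Printing Implicit Defensive.
Import Order.TTheory GRing.Theory Num.Theory.
Local Open Scope ring_scope.

(* We write L = 2*ell (a nat). Row index a : 'I_(L+1) encodes m = a - ell,
   column index b encodes n = b - ell; so ell - m = L - a, ell + m = a,
   ell - n = L - b, ell + n = b.  2^ell = (sqrt 2)^(2 ell).
   tau_{m,n} = sqrt((ell-m)!(ell+m)!/((ell-n)!(ell+n)!)) * i^(2ell)/2^ell *
              [coefficient of z^(ell-m) in (z+1)^(ell-n) (z-1)^(ell+n)]. *)
Definition tau (L : nat) : 'M[algC]_(L.+1) :=
  \matrix_(a < L.+1, b < L.+1)
    (sqrtC (((L - a)`!)%:R * (a`!)%:R / (((L - b)`!)%:R * (b`!)%:R))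
     * 'i ^+ L / (sqrtC 2) ^+ L
     * ((('X + 1) ^+ (L - b) * ('X - 1) ^+ b : {poly algC})`_(L - a))).

From HB Require Import structures.
From mathcomp Require Import all_boot all_order all_algebra all_field.
From mathcomp Require Import zify ring.

Set Implicit Arguments.
Unset Strict Implicit.
Unset Printing Implicit Defensive.
Import Order.TTheory GRing.Theory Num.Theory.
Local Open Scope ring_scope.

(* Up to the nonzero factor i^L 2^(-L/2) sqrt((L-j)! j!), entry j of tau v is the
   coefficient of X^(L-j) in P = sum_b v_b / sqrt((L-b)! b!) (X+1)^(L-b) (X-1)^b.
   The polynomials (X+1)^(L-b) (X-1)^b form a basis of the polynomials of degree
   at most L, so tau v = 0 forces v = 0; the corner entries are i^L 2^(-L/2) times
   1 and (-1)^L. For L = 2k+1, support of v in the lower (upper) half makes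
   (X+1)^(k+1) (resp. (X-1)^(k+1)) divide P, while vanishing of tau v on one parity
   class gives P(-X) = +-P, which mirrors this root of multiplicity k+1 at -1 (resp. 1)
   to 1 (resp. -1); since deg P <= 2k+1, P = 0. *)

Lemma XaddN1E {R : nzRingType} : ('X + 1 : {poly R}) = 'X - (-1)%:P.
Proof. by rewrite polyCN opprK polyC1. Qed.

Lemma Xsub1E {R : nzRingType} : ('X - 1 : {poly R}) = 'X - 1%:P.
Proof. by rewrite polyC1. Qed.

Lemma comp_poly_oppX (R : comNzRingType) (p : {poly R}) (s : R) :
  (forall i, (-1) ^+ i * p`_i = s * p`_i) -> p \Po - 'X = s *: p.
Proof.
move=> sym; rewrite comp_polyE -[in RHS](coefK p) poly_def scaler_sumr.
apply: eq_bigr => i _.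
by rewrite -scaleN1r exprZn scalerA mulrC sym scalerA.
Qed.

Section PlusMinusBasis.

Variable F : numFieldType.

Definition pm_basis (L b : nat) : {poly F} := ('X + 1) ^+ (L - b) * ('X - 1) ^+ b.

Lemma size_pm_basis L b : (b <= L)%N -> size (pm_basis L b) = L.+1.
Proof.
move=> le_bL; rewrite /pm_basis XaddN1E Xsub1E.
rewrite size_mul ?expf_neq0 ?polyXsubC_eq0 // !size_exp_XsubC; lia.
Qed.

Lemma pm_basis_free L (w : nat -> F) :
  \sum_(b < L.+1) w b *: pm_basis L b = 0 -> forall b, (b <= L)%N -> w b = 0.
Proof.
elim: L w => [|L IHL] w sum0 b le_bL.
  move: le_bL sum0; rewrite leqn0 => /eqP ->.
  rewrite big_ord1 /pm_basis !expr0 mulr1 => /(congr1 (coefp 0)).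
  by rewrite /= coefZ coef1 mulr1 coef0.
have sumE : \sum_(b < L.+2) w b *: pm_basis L.+1 b =
    w 0%N *: ('X + 1) ^+ L.+1 + ('X - 1) * \sum_(b < L.+1) w b.+1 *: pm_basis L b.
  rewrite big_ord_recl /pm_basis subn0 expr0 mulr1 mulr_sumr; congr (_ + _).
  apply: eq_bigr => i _.
  by rewrite /= /bump add1n subSS exprS -!scalerAr mulrCA.
(* Evaluating at 1 kills all terms but the first. *)
have w0 : w 0%N = 0.
  move: sum0; rewrite sumE => /(congr1 (horner^~ 1)).
  rewrite !hornerE subrr mul0r addr0 => /eqP; rewrite mulf_eq0 expf_eq0 /=.
  by rewrite -mulr2n mulrn_eq0 oner_eq0 orbF orbF => /eqP.
case: b le_bL => [//|b] le_bL.
apply: (IHL (fun i => w i.+1)) => //.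
move: sum0; rewrite sumE w0 scale0r add0r => /eqP.
by rewrite mulf_eq0 Xsub1E polyXsubC_eq0 => /eqP.
Qed.

Lemma compN_dvdp_eq0 (a s : F) n (p : {poly F}) :
  a != 0 -> s != 0 -> p \Po - 'X = s *: p ->
  ('X - a%:P) ^+ n %| p -> (size p <= n.*2)%N -> p = 0.
Proof.
move=> a_neq0 s_neq0 sym dvd_p size_p.
have dvd_pN : ('X - (- a)%:P) ^+ n %| p.
  have := dvdp_comp_poly (- 'X) dvd_p.
  rewrite sym dvdpZr // rmorphXn /= comp_polyB comp_polyX comp_polyC.
  have -> : - 'X - a%:P = (-1) *: ('X - (- a)%:P) by rewrite scaleN1r polyCN opprB addrC.
  by rewrite exprZn dvdpZl // expf_neq0 // oppr_eq0 oner_eq0.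
have coprime_pm : coprimep (('X - a%:P) ^+ n) (('X - (- a)%:P) ^+ n).
  apply/coprimep_expl/coprimep_expr/coprimep_XsubC2.
  by rewrite -opprD oppr_eq0 -mulr2n mulrn_eq0.
have dvd_prod : ('X - a%:P) ^+ n * ('X - (- a)%:P) ^+ n %| p.
  by rewrite Gauss_dvdp // dvd_p dvd_pN.
apply/eqP/negPn/negP => /dvdp_leq/(_ dvd_prod).
rewrite size_mul ?expf_neq0 ?polyXsubC_eq0 // !size_exp_XsubC addSn => /leq_trans/(_ size_p).
by rewrite addnS -addnn ltnn.
Qed.

End PlusMinusBasis.

Definition tau_const (L : nat) : algC := 'i ^+ L / sqrtC 2 ^+ L.

Definition tau_weight (L a : nat) : algC := sqrtC (((L - a)`!)%:R * (a`!)%:R).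

Definition tau_poly {L} (v : 'cV[algC]_L.+1) : {poly algC} :=
  \sum_(b < L.+1) (v b ord0 / tau_weight L b) *: pm_basis algC L b.

Lemma tau_weight_neq0 L a : tau_weight L a != 0.
Proof. by rewrite sqrtC_eq0 mulf_neq0 // pnatr_eq0 -lt0n fact_gt0. Qed.

Lemma tau_const_neq0 L : tau_const L != 0.
Proof.
by rewrite mulf_neq0 ?invr_eq0 ?expf_neq0 ?neq0Ci // sqrtC_eq0 pnatr_eq0.
Qed.

Lemma norm_tau_const_lt1 L : (0 < L)%N -> `|tau_const L| < 1.
Proof.
move=> L_gt0; have sqrt2_gt1 : 1 < sqrtC 2 :> algC.
  by rewrite -[X in X < _]sqrtC1 ltr_sqrtC ?nnegrE ?ler01 ?ler0n // ltr1n.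
have sqrt2_gt0 : 0 < sqrtC 2 :> algC by apply: lt_trans sqrt2_gt1.
rewrite normrM normfV !normrX normCi expr1n mul1r gtr0_norm //.
by rewrite invf_lt1 ?exprn_gt0 // exprn_egt1 -?lt0n.
Qed.

Lemma tauE L (a b : 'I_L.+1) :
  tau L a b = tau_const L * (tau_weight L a / tau_weight L b) * (pm_basis algC L b)`_(L - a).
Proof.
by rewrite mxE rootCMl ?rootCV ?mulr_ge0 ?ler0n // /tau_const /tau_weight /pm_basis; ring.
Qed.

Section TauPoly.

Variable L : nat.
Implicit Type v : 'cV[algC]_L.+1.

Lemma tau_mulmxE v (j : 'I_L.+1) :
  (tau L *m v) j ord0 = tau_const L * tau_weight L j * (tau_poly v)`_(L - j).
Proof.
rewrite mxE /tau_poly coef_sum mulr_sumr; apply: eq_bigr => b _.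
by rewrite tauE coefZ; ring.
Qed.

Lemma tau_mulmx_eq0 v (j : 'I_L.+1) :
  ((tau L *m v) j ord0 == 0) = ((tau_poly v)`_(L - j) == 0).
Proof.
rewrite tau_mulmxE -mulrA mulf_eq0 (negbTE (tau_const_neq0 L)).
by rewrite mulf_eq0 (negbTE (tau_weight_neq0 L j)).
Qed.

Lemma size_tau_poly v : (size (tau_poly v) <= L.+1)%N.
Proof.
apply: (big_ind (fun p : {poly algC} => size p <= L.+1)%N) => [|p q|b _].
- by rewrite size_poly0.
- by move=> p_le q_le; rewrite (leq_trans (size_polyD _ _)) // geq_max p_le q_le.
- by rewrite (leq_trans (size_scale_leq _ _)) // size_pm_basis // -ltnS.
Qed.

Lemma tau_poly_eq0 v : tau_poly v = 0 -> v = 0.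
Proof.
pose w b := if (b < L.+1)%N then v (inord b) ord0 / tau_weight L b else 0.
move=> v0; have w0 : \sum_(b < L.+1) w b *: pm_basis algC L b = 0.
  by rewrite -[RHS]v0; apply: eq_bigr => b _; rewrite /w ltn_ord inord_val.
apply/matrixP => i j; rewrite (ord1 j) mxE.
have /eqP := pm_basis_free w0 (ltn_ord i).
rewrite /w ltn_ord inord_val mulf_eq0 invr_eq0 (negbTE (tau_weight_neq0 L i)).
by rewrite orbF => /eqP.
Qed.

Lemma tau_poly_coef_eq0 v i :
  (i <= L)%N -> (tau L *m v) (inord (L - i)) ord0 = 0 -> (tau_poly v)`_i = 0.
Proof.
move=> le_iL /eqP; rewrite tau_mulmx_eq0 inordK ?subKn ?ltnS ?leq_subr //.
by move/eqP.
Qed.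

Lemma tau_unitmx : tau L \in unitmx.
Proof.
rewrite -unitmx_tr unitmxE unitfE; apply/det0P => -[u u_neq0 uM0].
have tau_u0 : tau L *m u^T = 0 by rewrite -(trmxK (tau L)) -trmx_mul uM0 trmx0.
suff : u^T = 0 by move/(congr1 trmx); rewrite trmxK trmx0 => u0; rewrite u0 eqxx in u_neq0.
apply: tau_poly_eq0; apply/polyP => i; rewrite coef0.
have [le_iL | lt_Li] := leqP i L; last by rewrite nth_default // (leq_trans (size_tau_poly _)).
by apply: tau_poly_coef_eq0 => //; rewrite tau_u0 mxE.
Qed.

Lemma tau_ord0 : tau L ord0 ord0 = tau_const L.
Proof.
rewrite tauE divff ?tau_weight_neq0 // mulr1 subn0 /pm_basis subn0 expr0 mulr1.
have /monicP := monic_exp L (monicXsubC (-1 : algC)).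
by rewrite lead_coefE size_exp_XsubC -XaddN1E => ->; rewrite mulr1.
Qed.

Lemma tau_ord_max : tau L ord_max ord_max = tau_const L * (-1) ^+ L.
Proof.
rewrite tauE divff ?tau_weight_neq0 // mulr1 /= subnn /pm_basis subnn expr0 mul1r.
by rewrite -horner_coef0 !hornerE.
Qed.

Lemma tau_poly_compN v (par : bool) : odd L ->
  (forall j : 'I_L.+1, odd j = par -> (tau L *m v) j ord0 = 0) ->
  tau_poly v \Po - 'X = (-1) ^+ par *: tau_poly v.
Proof.
move=> odd_L vanish; apply: comp_poly_oppX => i.
have [lt_Li | le_iL] := ltnP L i.
  by rewrite nth_default ?mulr0 // (leq_trans (size_tau_poly _)).
have [par_i | par_i] := eqVneq (odd i) par; first by rewrite -signr_odd par_i.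
rewrite tau_poly_coef_eq0 ?mulr0 // vanish // inordK ?ltnS ?leq_subr //.
by rewrite oddB // odd_L addTb; move: par_i {vanish}; case: (odd i); case: par.
Qed.

Lemma dvdp_tau_poly v (d : {poly algC}) :
  (forall b : 'I_L.+1, v b ord0 != 0 -> d %| pm_basis algC L b) -> d %| tau_poly v.
Proof.
move=> dvd_basis; apply: (big_ind (fun p => d %| p)) => [|p q|b _].
- exact: dvdp0.
- exact: dvdp_add.
- rewrite -mul_polyC; have [vb0 | vb_neq0] := eqVneq (v b ord0) 0.
    by rewrite vb0 mul0r polyC0 mul0r dvdp0.
  by rewrite dvdp_mull // dvd_basis.
Qed.

Lemma dvdp_tau_poly_XaddN1 v n :
  (forall b : 'I_L.+1, (L < n + b)%N -> v b ord0 = 0) ->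
  ('X - (-1)%:P) ^+ n %| tau_poly v.
Proof.
move=> supp; apply: dvdp_tau_poly => b vb_neq0.
rewrite /pm_basis -XaddN1E dvdp_mulr // dvdp_exp2l //.
have : ~~ (L < n + b)%N by apply: contra vb_neq0 => /supp ->.
rewrite -leqNgt; lia.
Qed.

Lemma dvdp_tau_poly_Xsub1 v n :
  (forall b : 'I_L.+1, (b < n)%N -> v b ord0 = 0) ->
  ('X - 1%:P) ^+ n %| tau_poly v.
Proof.
move=> supp; apply: dvdp_tau_poly => b vb_neq0.
rewrite /pm_basis -Xsub1E dvdp_mull // dvdp_exp2l // leqNgt.
by apply: contra vb_neq0 => /supp ->.
Qed.

End TauPoly.

Theorem mainTheorem10 (k : nat) :
  [/\ tau k.*2.+1 \in unitmx,
      `|tau k.*2.+1 ord0 ord0| < 1 /\ `|tau k.*2.+1 ord_max ord_max| < 1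
    & forall v : 'cV[algC]_(k.*2.+2),
        ((forall j : 'I_(k.*2.+2), (k < j)%N -> v j ord0 = 0) \/
         (forall j : 'I_(k.*2.+2), (j <= k)%N -> v j ord0 = 0)) ->
        ((forall j : 'I_(k.*2.+2), odd j -> (tau k.*2.+1 *m v) j ord0 = 0) \/
         (forall j : 'I_(k.*2.+2), ~~ odd j -> (tau k.*2.+1 *m v) j ord0 = 0)) ->
        v = 0].
Proof.
split; [exact: tau_unitmx | split | move=> v supp par_supp].
- by rewrite tau_ord0 norm_tau_const_lt1.
- by rewrite tau_ord_max normrM normrX normrN1 expr1n mulr1 norm_tau_const_lt1.
apply: tau_poly_eq0.
have odd_L : odd k.*2.+1 by rewrite /= odd_double.
have [par sym] : exists par : bool, tau_poly v \Po - 'X = (-1) ^+ par *: tau_poly v.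
  case: par_supp => vanish; [exists true | exists false];
    by apply: tau_poly_compN => // j odd_j; apply: vanish; rewrite odd_j.
have size_v : (size (tau_poly v) <= k.+1.*2)%N by apply: size_tau_poly.
have sign_neq0 : (-1) ^+ par != 0 :> algC by rewrite signr_eq0.
case: supp => supp.
- apply: (compN_dvdp_eq0 (a := -1) _ sign_neq0 sym _ size_v).
    by rewrite oppr_eq0 oner_eq0.
  by apply: dvdp_tau_poly_XaddN1 => j lt_j; apply: supp; lia.
- apply: (compN_dvdp_eq0 (a := 1) _ sign_neq0 sym _ size_v); first exact: oner_neq0.
  exact: dvdp_tau_poly_Xsub1.
Qed.
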